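(* Let $\mathfrak E$ be a tree structure ensemble and $\mathbb V=\mathcal F(\mathfrak E)$. Suppose $f^*\in\mathbb V$, where $f^*(\mathbf x)=f_1(x_1)+f_2(x_2)+\cdots+f_{m'}(x_{m'})$ for some univariate functions $f_1,\dots,f_{m'}$ on $\{1,\dots,B\}$. Then for any feature $1\le i\le m'$ and any knot $t$ of $f_i$, i.e. any value $t$ with $f_i(t)\ne f_i(t+1)$, $\mathbb V$ has full coverage of the split $(i,t)$.
   Context: $\mathcal X=\{1,\dots,B\}^d$. A tree structure is a finite rooted binary tree with axis-aligned splitting rules at internal nodes whose leaves partition $\mathcal X$ into rectangular cells; a tree structure ensemble is a tuple of tree structures, and $\mathcal F(\mathfrak E)$ is the linear span of the indicator functions of all leaves of all its trees (functions on $\mathcal X$). For a coordinate index $i$, write points of $\mathcal X$ as $(\mathbf x^{-i},x_i)$ with $\mathbf x^{-i}\in\{1,\dots,B\}^{d-1}$ the other coordinates, and let $\mathbf e_i$ be the $i$-th coordinate vector. A point $\mathbf x$ is a jump location for $f$ with respect to feature $i$ if $f(\mathbf x)\ne f(\mathbf x+\mathbf e_i)$. For a set $\mathbb V$ of functions, $\mathrm{coverage}(i,t;\mathbb V)=\{\mathbf x^{-i}\in\{1,\dots,B\}^{d-1}: \exists f\in\mathbb V$ such that $(\mathbf x^{-i},t)$ is a jump location for $f$ with respect to feature $i\}$, and $\mathbb V$ has full coverage of the split $(i,t)$ if $\mathrm{coverage}(i,t;\mathbb V)=\{1,\dots,B\}^{d-1}$. *)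

From HB Require Import structures.
From mathcomp Require Import all_boot all_order all_algebra.
From mathcomp Require Import reals.
Set Implicit Arguments. Unset Strict Implicit. Unset Printing Implicit Defensive.
Import Order.TTheory GRing.Theory Num.Theory.
Local Open Scope ring_scope.

(* Points of R^d-indexed grid: x : 'I_d -> nat; features are 0-indexed
   ('I_d), coordinate values are 1-based as in the paper. *)
Definition point (d : nat) := 'I_d -> nat.

Definition inX (d B : nat) (x : point d) : Prop := forall j : 'I_d, (1 <= x j <= B)%N.

(* Tree structures: axis-aligned splitting rule at internal nodes:
   Node i s l r sends x to l if x_i <= s, to r otherwise. *)
Inductive tree (d : nat) : Type :=
| Leaf : tree d
| Node : 'I_d -> nat -> tree d -> tree d -> tree d.

Fixpoint cells (d : nat) (T : tree d) : seq (point d -> bool) :=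
  match T with
  | Leaf => [:: fun _ => true]
  | Node i s l r =>
      [seq (fun x => (x i <= s)%N && c x) | c <- cells l] ++
      [seq (fun x => (s < x i)%N && c x) | c <- cells r]
  end.

Definition ensemble (d : nat) := seq (tree d).

Definition ens_cells (d : nat) (E : ensemble d) : seq (point d -> bool) :=
  flatten [seq cells T | T <- E].

(* F(E): linear span of the leaf indicator functions, as functions on X. *)
Definition spanF (R : realType) (d B : nat) (E : ensemble d)
    (f : point d -> R) : Prop :=
  exists c : nat -> R, forall x, inX B x ->
    f x = \sum_(k < size (ens_cells E)) c k * ((nth (fun _ => false) (ens_cells E) k) x)%:R.

Definition setc (d : nat) (x : point d) (i : 'I_d) (v : nat) : point d :=
  fun j => if j == i then v else x j.

Definition shift (d : nat) (x : point d) (i : 'I_d) : point d :=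
  setc x i (x i).+1.

Definition jump_loc (R : realType) (d B : nat) (f : point d -> R) (x : point d) (i : 'I_d) : Prop :=
  inX B x /\ inX B (shift x i) /\ f x <> f (shift x i).

(* x^{-i} in {1..B}^{d-1}: represented by a point y whose i-th coordinate is ignored. *)
Definition inXminus (d B : nat) (i : 'I_d) (y : point d) : Prop :=
  forall j : 'I_d, j != i -> (1 <= y j <= B)%N.

Definition coverage (R : realType) (d B : nat) (i : 'I_d) (t : nat)
    (V : (point d -> R) -> Prop) (y : point d) : Prop :=
  inXminus B i y /\ exists f, V f /\ jump_loc B f (setc y i t) i.

Definition full_coverage (R : realType) (d B : nat) (i : 'I_d) (t : nat)
    (V : (point d -> R) -> Prop) : Prop :=
  forall y : point d, inXminus B i y -> coverage B i t V y.

(* An additive function f*(x) = f_1(x_1) + ... + f_m'(x_m') changes along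
   feature i by exactly f_i(t+1) - f_i(t), whatever the other coordinates are.
   So if t is a knot of f_i, then f* itself, which lies in V, jumps at
   (x^{-i}, t) for every x^{-i}, and this gives full coverage of (i, t). *)
From HB Require Import structures.
From mathcomp Require Import all_boot all_order all_algebra.
From mathcomp Require Import reals.
Set Implicit Arguments. Unset Strict Implicit. Unset Printing Implicit Defensive.
Import Order.TTheory GRing.Theory Num.Theory.
Local Open Scope ring_scope.

Section Coordinates.

Variables (d : nat) (i : 'I_d).

Lemma setc_id (x : point d) (v : nat) : setc x i v i = v.
Proof. by rewrite /setc eqxx. Qed.

Lemma setc_other (x : point d) (v : nat) (j : 'I_d) :
  j != i -> setc x i v j = x j.
Proof. by rewrite /setc => /negbTE ->. Qed.

Lemma shift_setc (x : point d) (v : nat) (j : 'I_d) :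
  shift (setc x i v) i j = setc x i v.+1 j.
Proof. by rewrite /shift setc_id /setc; case: (j == i). Qed.

Lemma inX_setc (B : nat) (y : point d) (v : nat) :
  inXminus B i y -> (1 <= v <= B)%N -> inX B (setc y i v).
Proof.
move=> hy hv j; have [->|hj] := eqVneq j i; first by rewrite setc_id.
by rewrite setc_other //; apply: hy.
Qed.

End Coordinates.

Lemma additive_setc_diff (V : zmodType) (d : nat) (P : pred 'I_d)
    (fs : nat -> nat -> V) (x : point d) (i : 'I_d) (u v : nat) :
  P i ->
  \sum_(j < d | P j) fs j (setc x i u j) - \sum_(j < d | P j) fs j (setc x i v j)
  = fs i u - fs i v.
Proof.
move=> Pi; rewrite (bigD1 i Pi) [X in _ - X](bigD1 i Pi) /= !setc_id.
have -> : \sum_(j < d | P j && (j != i)) fs j (setc x i u j)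
        = \sum_(j < d | P j && (j != i)) fs j (setc x i v j).
  by apply: eq_bigr => j /andP[_ hj]; rewrite !setc_other.
by rewrite opprD addrACA subrr addr0.
Qed.

Lemma jump_loc_additive (R : realType) (d B : nat) (P : pred 'I_d)
    (fs : nat -> nat -> R) (i : 'I_d) (t : nat) (y : point d) :
  P i -> (1 <= t)%N -> (t < B)%N -> fs i t <> fs i t.+1 ->
  inXminus B i y ->
  jump_loc B (fun x : point d => \sum_(j < d | P j) fs j (x j)) (setc y i t) i.
Proof.
move=> Pi ht1 htB hne hy; split; last split.
- by apply: inX_setc => //; rewrite ht1 ltnW.
- by move=> j; rewrite shift_setc; apply: inX_setc j => //; rewrite ltnS ltnW.
- under [X in _ <> X]eq_bigr do rewrite shift_setc.
  by move/eqP; rewrite -subr_eq0 additive_setc_diff // subr_eq0 => /eqP.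
Qed.

Lemma full_coverage_of_jumps (R : realType) (d B : nat) (i : 'I_d) (t : nat)
    (V : (point d -> R) -> Prop) (f : point d -> R) :
  V f -> (forall y, inXminus B i y -> jump_loc B f (setc y i t) i) ->
  full_coverage B i t V.
Proof. by move=> Vf hjump y hy; split=> //; exists f; split=> //; apply: hjump. Qed.

Theorem lemmaF4 (R : realType) (d B m' : nat) (E : ensemble d)
    (fs : nat -> nat -> R) :
  (m' <= d)%N ->
  spanF B E (fun x : point d => \sum_(j < d | (j < m')%N) fs j (x j)) ->
  forall (i : 'I_d) (t : nat),
    (i < m')%N -> (1 <= t)%N -> (t < B)%N -> fs i t <> fs i t.+1 ->
    full_coverage (R := R) B i t (spanF B E).
Proof.
move=> _ hV i t him ht1 htB hne.
apply: (full_coverage_of_jumps hV) => y hy.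
exact: (jump_loc_additive (P := fun j : 'I_d => (j < m')%N)).
Qed.
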